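(* Consider a planar multiple linear antenna array consisting of $M$ linear sub-arrays. Sub-array $m$ ($m=1,\dots,M$) has $N_m$ elements, with inter-element spacing $d_m>0$, and its $n$-th element ($n=1,\dots,N_m$) is located at $(x_{m,1}+(n-1)d_m,\; y_{m,1})$, where the leading element of the first sub-array is at the origin, $(x_{1,1},y_{1,1})=(0,0)$. For a complex weight vector $\mathbf w=(w_{m,n})$ (not identically zero), the beam pattern is $$f_{\mathbf w}(\theta)=\frac{1}{\sum_{m=1}^{M}\sum_{n=1}^{N_m}|w_{m,n}|}\sum_{m=1}^{M} e^{j2\pi(x_{m,1}\sin\theta+y_{m,1}\cos\theta)/\lambda}\sum_{n=1}^{N_m} w_{m,n}\,e^{j2\pi(n-1)d_m\sin\theta/\lambda},$$ where $\lambda>0$ is the wavelength. Let $\theta$ be an angle and $\mathfrak M(\theta)$ an angle with $\mathfrak M(\theta)\neq\theta$. Then $f_{\mathbf w}(\theta)=f_{\mathbf w}(\mathfrak M(\theta))$ holds for every weight vector $\mathbf w$ (i.e. the beam pattern is periodic at $\theta$ with period mapping $\mathfrak M$) if and only if both of the following hold: (C1) for every $i=1,\dots,M$, $\dfrac{d_i\left(\sin\theta-\sin(\mathfrak M(\theta))\right)}{\lambda}\in\mathbb Z\setminus\{0\}$; (C2) for every $l=2,\dots,M$, $\dfrac{x_{l,1}\left(\sin\theta-\sin(\mathfrak M(\theta))\right)+y_{l,1}\left(\cos\theta-\cos(\mathfrak M(\theta))\right)}{\lambda}\in\mathbb Z$.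
   Context: Angles $\theta$ parametrize far-field directions in the plane via the unit vector $(\sin\theta,\cos\theta)$. Definition (principle of grating lobes): the beam pattern $f_{\mathbf w}(\cdot)$ is called periodic (on an angular interval) if there is a mapping $\mathfrak M$ with $\mathfrak M(\theta)\neq\theta$ and $f_{\mathbf w}(\theta)=f_{\mathbf w}(\mathfrak M(\theta))$ for every weight vector $\mathbf w$ and every $\theta$ in the interval; $\mathfrak M$ is called the period mapping. If the absolute radiation maxima occur within the interval, the pattern is said to exhibit grating lobes. *)

From Stdlib Require Import Reals List.
From Coquelicot Require Import Coquelicot.
Open Scope R_scope.

Definition sumC (l : list nat) (f : nat -> C) : C :=
  fold_right (fun i acc => Cplus (f i) acc) (RtoC 0) l.
Definition sumR (l : list nat) (f : nat -> R) : R :=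
  fold_right (fun i acc => f i + acc) 0 l.

Definition cis (phi : R) : C := (cos phi, sin phi).

(* Sub-arrays indexed m = 1..M, elements n = 1..N m (1-based, as in the paper).
   x m, y m are the coordinates (x_{m,1}, y_{m,1}) of the leading element of
   sub-array m; d m is its inter-element spacing; lam the wavelength. *)
Definition beam (M : nat) (N : nat -> nat) (d x y : nat -> R) (lam : R)
  (w : nat -> nat -> C) (th : R) : C :=
  Cmult
    (Cinv (RtoC (sumR (seq 1 M) (fun m => sumR (seq 1 (N m)) (fun n => Cmod (w m n))))))
    (sumC (seq 1 M) (fun m =>
       Cmult (cis (2 * PI * (x m * sin th + y m * cos th) / lam))
             (sumC (seq 1 (N m)) (fun n =>
                Cmult (w m n) (cis (2 * PI * (INR n - 1) * d m * sin th / lam)))))).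

Definition nonzero_weights (M : nat) (N : nat -> nat) (w : nat -> nat -> C) : Prop :=
  exists m n, (1 <= m <= M)%nat /\ (1 <= n <= N m)%nat /\ w m n <> RtoC 0.

From Stdlib Require Import Reals ZArith List Lra Lia.
From Coquelicot Require Import Coquelicot.
Open Scope R_scope.

(* Testing the identity on the weight vector supported on a single element (m, n)
   shows that the phase of that element, 2 pi <position, direction> / lam, must
   change by an integer multiple of 2 pi between th and th'.  For n = 1 this is
   (C2) (and is automatic for the reference element at the origin); the
   difference between n = 2 and n = 1 gives the integrality in (C1), which is
   nonzero because sin is injective on [-pi/2, pi/2].  Conversely, (C1) and
   (C2) make every element phase change by a multiple of 2 pi, so each term of
   the beam pattern is unchanged. *)

Lemma cis_add a b : Cmult (cis a) (cis b) = cis (a + b).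
Proof. unfold Cmult, cis; simpl; rewrite cos_plus, sin_plus; f_equal; ring. Qed.

Lemma cis_2PI_IZR (k : Z) : cis (2 * PI * IZR k) = RtoC 1.
Proof.
  assert (sin_PI_k : sin (PI * IZR k) = 0) by (apply sin_eq_0_1; exists k; ring).
  unfold cis, RtoC; f_equal.
  - replace (2 * PI * IZR k) with (2 * (PI * IZR k)) by ring.
    rewrite cos_2a_sin, sin_PI_k; ring.
  - apply sin_eq_0_1; exists (2 * k)%Z; rewrite mult_IZR; ring.
Qed.

Lemma cis_eq_iff a b : cis a = cis b <-> exists k : Z, a - b = 2 * PI * IZR k.
Proof.
  split.
  - unfold cis; intros E; injection E as cos_ab sin_ab.
    assert (cos_sub : cos (a - b) = 1).
    { rewrite cos_minus, cos_ab, sin_ab, <- (sin2_cos2 b); unfold Rsqr; ring. }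
    replace (a - b) with (2 * ((a - b) / 2)) in cos_sub by field.
    rewrite cos_2a_sin in cos_sub.
    assert (sin_half : sin ((a - b) / 2) = 0) by nra.
    destruct (sin_eq_0_0 _ sin_half) as [k Hk]; exists k; lra.
  - intros [k Hk]; replace a with (b + 2 * PI * IZR k) by lra.
    rewrite <- cis_add, cis_2PI_IZR; apply Cmult_1_r.
Qed.

Section FoldSingleTerm.

Variables (A : Type) (op : A -> A -> A) (e : A).
Hypotheses (op_e_l : forall a, op e a = a) (op_e_r : forall a, op a e = a).

Lemma fold_right_unit_terms (l : list nat) (f : nat -> A) :
  (forall i, In i l -> f i = e) -> fold_right (fun i acc => op (f i) acc) e l = e.
Proof.
  induction l as [|a l IH]; intros Hf; simpl; auto.
  rewrite Hf, IH by (now left) || (intros; apply Hf; now right); apply op_e_l.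
Qed.

Lemma fold_right_single_term (l : list nat) (f : nat -> A) (i0 : nat) :
  NoDup l -> In i0 l -> (forall i, In i l -> i <> i0 -> f i = e) ->
  fold_right (fun i acc => op (f i) acc) e l = f i0.
Proof.
  induction l as [|a l IH]; intros Hnodup Hin Hf; [destruct Hin|].
  inversion Hnodup as [|? ? a_notin l_nodup]; subst; simpl.
  destruct (Nat.eq_dec a i0) as [<-|a_ne].
  - rewrite fold_right_unit_terms; [apply op_e_r|].
    intros i Hi; apply Hf; [now right|]; intros ->; contradiction.
  - destruct Hin as [->|Hin]; [contradiction|].
    rewrite (Hf a (or_introl eq_refl) a_ne), op_e_l.
    apply IH; auto; intros i Hi; apply Hf; now right.
Qed.

End FoldSingleTerm.

Lemma sumC_zero (l : list nat) (f : nat -> C) :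
  (forall i, In i l -> f i = RtoC 0) -> sumC l f = RtoC 0.
Proof. exact (fold_right_unit_terms _ _ _ Cplus_0_l l f). Qed.

Lemma sumR_zero (l : list nat) (f : nat -> R) :
  (forall i, In i l -> f i = 0) -> sumR l f = 0.
Proof. exact (fold_right_unit_terms _ _ _ Rplus_0_l l f). Qed.

Lemma sumC_single (l : list nat) (f : nat -> C) (i0 : nat) :
  NoDup l -> In i0 l -> (forall i, In i l -> i <> i0 -> f i = RtoC 0) ->
  sumC l f = f i0.
Proof. exact (fold_right_single_term _ _ _ Cplus_0_l Cplus_0_r l f i0). Qed.

Lemma sumR_single (l : list nat) (f : nat -> R) (i0 : nat) :
  NoDup l -> In i0 l -> (forall i, In i l -> i <> i0 -> f i = 0) ->
  sumR l f = f i0.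
Proof. exact (fold_right_single_term _ _ _ Rplus_0_l Rplus_0_r l f i0). Qed.

Lemma sumC_ext (l : list nat) (f g : nat -> C) :
  (forall i, In i l -> f i = g i) -> sumC l f = sumC l g.
Proof.
  induction l as [|a l IH]; intros Hfg; simpl; auto.
  rewrite Hfg, IH by (now left) || (intros; apply Hfg; now right); reflexivity.
Qed.

Lemma in_seq_1 (i n : nat) : (1 <= i <= n)%nat -> In i (seq 1 n).
Proof. intros Hi; apply in_seq; lia. Qed.

Section Array.

Variables (M : nat) (N : nat -> nat) (d x y : nat -> R) (lam : R).

Definition unit_weight (m0 n0 : nat) : nat -> nat -> C :=
  fun m n => if andb (Nat.eqb m m0) (Nat.eqb n n0) then RtoC 1 else RtoC 0.

Lemma unit_weight_nonzero m0 n0 :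
  (1 <= m0 <= M)%nat -> (1 <= n0 <= N m0)%nat -> nonzero_weights M N (unit_weight m0 n0).
Proof.
  intros Hm Hn; exists m0, n0; split; [exact Hm | split; [exact Hn |]].
  unfold unit_weight; rewrite !Nat.eqb_refl; simpl.
  intros E; injection E; lra.
Qed.

Lemma unit_weight_off m0 n0 m n : (m, n) <> (m0, n0) -> unit_weight m0 n0 m n = RtoC 0.
Proof.
  intros Hne; unfold unit_weight.
  destruct (Nat.eqb_spec m m0), (Nat.eqb_spec n n0); subst; simpl; congruence.
Qed.

Definition element_phase (m n : nat) (t : R) : R :=
  2 * PI * ((x m + (INR n - 1) * d m) * sin t + y m * cos t) / lam.

Lemma beam_unit_weight m0 n0 t :
  (1 <= m0 <= M)%nat -> (1 <= n0 <= N m0)%nat ->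
  beam M N d x y lam (unit_weight m0 n0) t = cis (element_phase m0 n0 t).
Proof.
  intros Hm Hn.
  assert (total_mass :
    sumR (seq 1 M) (fun m => sumR (seq 1 (N m)) (fun n => Cmod (unit_weight m0 n0 m n))) = 1).
  { rewrite (sumR_single _ _ m0), (sumR_single _ _ n0);
      try apply seq_NoDup; try (apply in_seq_1; assumption).
    - unfold unit_weight; rewrite !Nat.eqb_refl; apply Cmod_1.
    - intros n _ ne; rewrite unit_weight_off by congruence; apply Cmod_0.
    - intros m _ ne; apply sumR_zero; intros n _.
      rewrite unit_weight_off by congruence; apply Cmod_0. }
  assert (array_factor :
    sumC (seq 1 M) (fun m =>
       Cmult (cis (2 * PI * (x m * sin t + y m * cos t) / lam))
             (sumC (seq 1 (N m)) (fun n =>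
                Cmult (unit_weight m0 n0 m n)
                      (cis (2 * PI * (INR n - 1) * d m * sin t / lam)))))
    = cis (element_phase m0 n0 t)).
  { rewrite (sumC_single _ _ m0), (sumC_single _ _ n0);
      try apply seq_NoDup; try (apply in_seq_1; assumption).
    - unfold unit_weight; rewrite !Nat.eqb_refl; simpl andb.
      rewrite Cmult_1_l, cis_add; unfold element_phase, Rdiv; f_equal; ring.
    - intros n _ ne; rewrite unit_weight_off by congruence; apply Cmult_0_l.
    - intros m _ ne; rewrite sumC_zero; [apply Cmult_0_r|].
      intros n _; rewrite unit_weight_off by congruence; apply Cmult_0_l. }
  unfold beam; rewrite total_mass, array_factor.
  replace (Cinv (RtoC 1)) with (RtoC 1) by (unfold Cinv, RtoC; simpl; f_equal; field).
  apply Cmult_1_l.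
Qed.

Definition lead_shift (l : nat) (th th' : R) : R :=
  (x l * (sin th - sin th') + y l * (cos th - cos th')) / lam.

Definition spacing_shift (i : nat) (th th' : R) : R :=
  d i * (sin th - sin th') / lam.

Lemma element_phase_sub m n th th' :
  element_phase m n th - element_phase m n th'
  = 2 * PI * (lead_shift m th th' + (INR n - 1) * spacing_shift m th th').
Proof. unfold element_phase, lead_shift, spacing_shift, Rdiv; ring. Qed.

Lemma beam_unit_weight_eq_iff m n th th' :
  (1 <= m <= M)%nat -> (1 <= n <= N m)%nat ->
  beam M N d x y lam (unit_weight m n) th = beam M N d x y lam (unit_weight m n) th'
  <-> exists k : Z, lead_shift m th th' + (INR n - 1) * spacing_shift m th th' = IZR k.
Proof.
  intros Hm Hn; assert (PI_pos := PI_RGT_0).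
  rewrite !beam_unit_weight, cis_eq_iff, element_phase_sub by assumption.
  split; intros [k Hk]; exists k.
  - apply (Rmult_eq_reg_l (2 * PI)); [exact Hk | lra].
  - rewrite Hk; reflexivity.
Qed.

Lemma integral_shifts_of_unit_weights m th th' :
  (1 <= m <= M)%nat -> (2 <= N m)%nat ->
  (forall n, (1 <= n <= 2)%nat ->
     beam M N d x y lam (unit_weight m n) th = beam M N d x y lam (unit_weight m n) th') ->
  (exists k : Z, lead_shift m th th' = IZR k) /\
  (exists k : Z, spacing_shift m th th' = IZR k).
Proof.
  intros Hm HN Hper.
  destruct (proj1 (beam_unit_weight_eq_iff m 1 th th' Hm ltac:(lia)) (Hper 1%nat ltac:(lia)))
    as [k1 Hk1].
  destruct (proj1 (beam_unit_weight_eq_iff m 2 th th' Hm ltac:(lia)) (Hper 2%nat ltac:(lia)))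
    as [k2 Hk2].
  simpl INR in Hk1, Hk2.
  split; [exists k1 | exists (k2 - k1)%Z]; rewrite ?minus_IZR, <- Hk1, <- ?Hk2; ring.
Qed.

Lemma beam_eq_of_integral_shifts w th th' :
  (forall m, (1 <= m <= M)%nat -> exists k : Z, lead_shift m th th' = IZR k) ->
  (forall m, (1 <= m <= M)%nat -> exists k : Z, spacing_shift m th th' = IZR k) ->
  beam M N d x y lam w th = beam M N d x y lam w th'.
Proof.
  intros Hlead Hspacing; unfold beam; f_equal.
  apply sumC_ext; intros m Hm; apply in_seq in Hm.
  destruct (Hlead m ltac:(lia)) as [k Hk], (Hspacing m ltac:(lia)) as [k' Hk'].
  f_equal.
  - apply cis_eq_iff; exists k; rewrite <- Hk; unfold lead_shift, Rdiv; ring.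
  - apply sumC_ext; intros n Hn; apply in_seq in Hn; f_equal.
    apply cis_eq_iff; exists ((Z.of_nat n - 1) * k')%Z.
    rewrite mult_IZR, minus_IZR, <- INR_IZR_INZ, <- Hk'.
    unfold spacing_shift, Rdiv; ring.
Qed.

Lemma spacing_shift_neq0 i th th' :
  0 < d i -> 0 < lam ->
  - (PI / 2) <= th <= PI / 2 -> - (PI / 2) <= th' <= PI / 2 -> th' <> th ->
  spacing_shift i th th' <> 0.
Proof.
  intros Hd Hlam Hth Hth' Hne Hzero; apply Hne, sin_inj; auto.
  unfold spacing_shift in Hzero.
  assert (Hsin : d i * (sin th - sin th') = 0).
  { apply (Rmult_eq_reg_r (/ lam)); [lra | apply Rinv_neq_0_compat; lra]. }
  apply Rmult_integral in Hsin as [|]; lra.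
Qed.

End Array.

Theorem theorem1 (M : nat) (N : nat -> nat) (d x y : nat -> R) (lam th th' : R) :
  (1 <= M)%nat ->
  (forall m, (1 <= m <= M)%nat -> (2 <= N m)%nat) ->
  (forall m, (1 <= m <= M)%nat -> 0 < d m) ->
  x 1%nat = 0 -> y 1%nat = 0 ->
  0 < lam ->
  - (PI / 2) <= th <= PI / 2 ->
  - (PI / 2) <= th' <= PI / 2 ->
  th' <> th ->
  ((forall w : nat -> nat -> C, nonzero_weights M N w ->
      beam M N d x y lam w th = beam M N d x y lam w th')
   <->
   ((forall i, (1 <= i <= M)%nat ->
       exists k : Z, k <> 0%Z /\ d i * (sin th - sin th') / lam = IZR k) /\
    (forall l, (2 <= l <= M)%nat ->
       exists k : Z,
         (x l * (sin th - sin th') + y l * (cos th - cos th')) / lam = IZR k))).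
Proof.
  intros _ HN Hd Hx Hy Hlam Hth Hth' Hne.
  split.
  - intros Hper.
    assert (Hshifts : forall m, (1 <= m <= M)%nat ->
      (exists k : Z, lead_shift x y lam m th th' = IZR k) /\
      (exists k : Z, spacing_shift d lam m th th' = IZR k)).
    { intros m Hm; apply (integral_shifts_of_unit_weights M N); auto.
      intros n Hn; apply Hper, unit_weight_nonzero; auto.
      specialize (HN m Hm); lia. }
    split.
    + intros i Hi; destruct (proj2 (Hshifts i Hi)) as [k Hk].
      exists k; split; [intros ->|exact Hk].
      exact (spacing_shift_neq0 d lam i th th' (Hd i Hi) Hlam Hth Hth' Hne Hk).
    + intros l Hl; apply (Hshifts l); lia.
  - intros [C1 C2] w _; apply beam_eq_of_integral_shifts.
    + intros m Hm; destruct (Nat.eq_dec m 1) as [->|Hm1].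
      * exists 0%Z; unfold lead_shift; rewrite Hx, Hy; unfold Rdiv; ring.
      * apply C2; lia.
    + intros m Hm; destruct (C1 m Hm) as [k [_ Hk]]; exists k; exact Hk.
Qed.
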